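(* Let $H\in(0,1)$, $W$ a fractional Brownian motion with Hurst parameter $H$, $b\in\{2,3,\dots\}$, $n\in\mathbb N$, and $0\le u\le v\le1$ with $ub^n,vb^n\in\mathbb Z$. Then for all real numbers $\mu_1,\dots,\mu_{b^{n+1}}$, $$\sum_{j=1}^{b^{n+1}}|\mu_j|\,\big|\mathbb E[(W(jb^{-n-1})-W((j-1)b^{-n-1}))(W(v)-W(u))]\big|\le\sum_{i=1}^{b^n}\Big(\max_{(i-1)b<j\le ib}|\mu_j|\Big)\big|\mathbb E[(W(ib^{-n})-W((i-1)b^{-n}))(W(v)-W(u))]\big|.$$ *)

From HB Require Import structures.
From mathcomp Require Import all_boot all_order all_algebra.
From mathcomp Require Import all_classical all_reals all_analysis.
Set Implicit Arguments. Unset Strict Implicit. Unset Printing Implicit Defensive.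
Import Order.TTheory GRing.Theory Num.Theory.
Local Open Scope classical_set_scope.
Local Open Scope ring_scope.

Definition fbm_cov {R : realType} (H s t : R) : R :=
  (s `^ (2 * H) + t `^ (2 * H) - `|t - s| `^ (2 * H)) / 2.

Definition centered_gaussian {d} {T : measurableType d} {R : realType}
  (P : probability T R) (X : T -> R) : Prop :=
  (forall A : set R, measurable A -> P (X @^-1` A) = \d_(0:R) A) \/
  (exists s : R, 0 < s /\
     forall A : set R, measurable A -> P (X @^-1` A) = normal_prob 0 s A).

Definition is_fBm {d} {T : measurableType d} {R : realType}
  (P : probability T R) (H : R) (W : R -> T -> R) : Prop :=
  [/\ forall t, 0 <= t -> measurable_fun setT (W t),
      forall t, 0 <= t -> W t \in Lfun P 2,
      forall s t, 0 <= s -> 0 <= t ->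
        'E_P[W s \* W t]%E = (fbm_cov H s t)%:E &
      forall (k : nat) (c : 'I_k -> R) (t : 'I_k -> R),
        (forall i, 0 <= t i) ->
        centered_gaussian P (fun w => \sum_(i < k) c i * W (t i) w)].

Definition incr_cov {d} {T : measurableType d} {R : realType}
  (P : probability T R) (W : R -> T -> R) (a b v u : R) : R :=
  fine ('E_P[(fun w => (W a w - W b w) * (W v w - W u w))%R])%E.

From HB Require Import structures.
From mathcomp Require Import all_boot all_order all_algebra.
From mathcomp Require Import all_classical all_reals all_analysis.
From mathcomp Require Import ring lra zify.
Set Implicit Arguments. Unset Strict Implicit. Unset Printing Implicit Defensive.
Import Order.TTheory GRing.Theory Num.Theory.
Local Open Scope ring_scope.

(* With p = 2H, bilinearity of the covariance gives
     E[(W t - W s)(W v - W u)] = K(s, t) / 2,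
     K(s, t) = |v - s|^p - |v - t|^p + |u - t|^p - |u - s|^p   (incr_kernel).
   The b^(n+1) fine cells fall into b^n blocks of b cells, block i filling the
   coarse cell ((i-1) b^-n, i b^-n].  As u and v lie on the coarse grid, every
   coarse cell is inside [u, v] or outside it.  Inside, K >= 0 since |.|^p is
   monotone; outside, K is the difference of two increments of x |-> x^p over
   windows of one length, a multiple of that length apart, so its sign is
   fixed by the convexity (p >= 1) or concavity (p <= 1) of x^p.  Hence the
   fine covariances of a block share a sign; they telescope to the coarse
   covariance, and sum |mu_j| |c_j| <= (max |mu_j|) |sum c_j| on each block. *)

Section MidpointConvexIncrements.
Variables (R : realType) (f : R -> R).

Hypothesis f_midconvex : forall {x y : R}, 0 <= x -> 0 <= y ->
  f (2^-1 * x + 2^-1 * y) <= 2^-1 * f x + 2^-1 * f y.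

(* Midpoint convexity at z + d, the midpoint of z and z + 2d: consecutive
   increments of length d do not decrease. *)
Lemma midconvex_incr_step (d z : R) : 0 <= d -> 0 <= z ->
  f (z + d) - f z <= f (z + d + d) - f (z + d).
Proof.
move=> d0 z0; have zdd : 0 <= z + d + d by rewrite !addr_ge0.
have := f_midconvex z0 zdd.
have -> : 2^-1 * z + 2^-1 * (z + d + d) = z + d.
  by rewrite -mulrDr (_ : z + (z + d + d) = 2 * (z + d)) ?mulKf ?pnatr_eq0 //; ring.
lra.
Qed.

Lemma midconvex_incr_mono (d z : R) (m : nat) : 0 <= d -> 0 <= z ->
  f (z + d) - f z <= f (z + m%:R * d + d) - f (z + m%:R * d).
Proof.
move=> d0 z0; elim: m => [|m IH]; first by rewrite mul0r addr0.
apply: (le_trans IH); rewrite -addn1 natrD mulrDl mul1r addrA.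
by apply: midconvex_incr_step => //; rewrite addr_ge0 // mulr_ge0.
Qed.

End MidpointConvexIncrements.

Section PowerIncrements.
Variable R : realType.
Implicit Types p d x y z : R.

Lemma powR_midconvex p x y : 1 <= p -> 0 <= x -> 0 <= y ->
  (2^-1 * x + 2^-1 * y) `^ p <= 2^-1 * x `^ p + 2^-1 * y `^ p.
Proof.
move=> p1 x0 y0.
have half : 1 - 2^-1 = 2^-1 :> R by field.
have half0 : (0 : R) <= 2^-1 by rewrite invr_ge0.
have half1 : (2^-1 : R) <= 1 by rewrite invf_le1 ?ler1n.
have xD : x \in `[0, +oo[%classic by rewrite inE /= in_itv /= x0.
have yD : y \in `[0, +oo[%classic by rewrite inE /= in_itv /= y0.
have := convex_powR p1 (Itv01 half0 half1) xD yD.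
by rewrite convRE [X in X `^ _ <= _ -> _]convRE /= -[unstable.onem _]/(1 - 2^-1) half.
Qed.

(* Midpoint concavity for 0 < p <= 1: apply the convexity of the power
   1/p >= 1 to x ^ p and y ^ p, then raise both sides to the power p. *)
Lemma powR_midconcave p x y : 0 < p -> p <= 1 -> 0 <= x -> 0 <= y ->
  2^-1 * x `^ p + 2^-1 * y `^ p <= (2^-1 * x + 2^-1 * y) `^ p.
Proof.
move=> p0 p1 x0 y0.
have q1 : 1 <= p^-1 by rewrite invf_ge1.
have := powR_midconvex q1 (powR_ge0 x p) (powR_ge0 y p).
rewrite -!powRrM !mulfV ?gt_eqF // !powRr1 // => /(ge0_ler_powR (ltW p0)).
rewrite -powRrM mulVf ?gt_eqF // powRr1; last first.
  by rewrite addr_ge0 // mulr_ge0 ?invr_ge0 ?powR_ge0.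
by apply; rewrite nnegrE ?powR_ge0 // addr_ge0 // mulr_ge0 ?invr_ge0.
Qed.

Definition pow_incr p d z := (z + d) `^ p - z `^ p.

Lemma pow_incr_shift_convex p d z (m : nat) : 1 <= p -> 0 <= d -> 0 <= z ->
  pow_incr p d z <= pow_incr p d (z + m%:R * d).
Proof.
move=> p1 d0 z0.
have := midconvex_incr_mono (fun x y => @powR_midconvex p x y p1) m d0 z0.
by rewrite /pow_incr addrAC.
Qed.

Lemma pow_incr_shift_concave p d z (m : nat) : 0 < p -> p <= 1 -> 0 <= d -> 0 <= z ->
  pow_incr p d (z + m%:R * d) <= pow_incr p d z.
Proof.
move=> p0 p1 d0 z0.
have neg_midconvex x y : 0 <= x -> 0 <= y ->
    - (2^-1 * x + 2^-1 * y) `^ p <= 2^-1 * - x `^ p + 2^-1 * - y `^ p.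
  by move=> x0 y0; have := powR_midconcave p0 p1 x0 y0; lra.
have := midconvex_incr_mono neg_midconvex m d0 z0.
rewrite /pow_incr; lra.
Qed.

End PowerIncrements.

Section IncrementKernel.
Variable R : realType.
Implicit Types p d u v s t : R.

(* Twice the covariance of the fBm increments over [s, t] and [u, v] when
   p = 2H; it is the increment over [s, t] of x |-> |u - x|^p - |v - x|^p. *)
Definition incr_kernel p u v s t :=
  `|v - s| `^ p - `|v - t| `^ p + `|u - t| `^ p - `|u - s| `^ p.

Lemma incr_kernel_telescope p u v (x : nat -> R) (lo hi : nat) : (lo <= hi)%N ->
  \sum_(lo.+1 <= j < hi.+1) incr_kernel p u v (x j.-1) (x j) =
  incr_kernel p u v (x lo) (x hi).
Proof.
move=> lohi; rewrite big_add1 /=.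
rewrite (telescope_sumr_eq (fun k => `|u - x k| `^ p - `|v - x k| `^ p)) //.
  by rewrite /incr_kernel; ring.
by move=> k _; rewrite /incr_kernel; ring.
Qed.

Lemma incr_kernel_inside p u v s t : 0 < p -> u <= s -> s <= t -> t <= v ->
  0 <= incr_kernel p u v s t.
Proof.
move=> p0 us st tv; rewrite /incr_kernel.
have vt_vs : `|v - t| `^ p <= `|v - s| `^ p.
  apply: (ge0_ler_powR (ltW p0)); rewrite ?nnegrE //.
  rewrite !ger0_norm ?subr_ge0 ?(le_trans st) //; lra.
have us_ut : `|u - s| `^ p <= `|u - t| `^ p.
  apply: (ge0_ler_powR (ltW p0)); rewrite ?nnegrE //.
  rewrite !(distrC u) !ger0_norm ?subr_ge0 ?(le_trans us) //; lra.
lra.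
Qed.

Lemma incr_kernel_outside p d u v s (m : nat) :
  0 <= d -> v = u + m%:R * d -> (s + d <= u \/ v <= s) ->
  exists2 z, 0 <= z &
    incr_kernel p u v s (s + d) = pow_incr p d (z + m%:R * d) - pow_incr p d z.
Proof.
move=> d0 -> [left_of|right_of].
- exists (u - (s + d)); first by rewrite subr_ge0.
  have md0 : 0 <= m%:R * d by rewrite mulr_ge0.
  rewrite /incr_kernel /pow_incr !ger0_norm; try lra.
  rewrite (_ : u + m%:R * d - s = u - (s + d) + m%:R * d + d); last by ring.
  rewrite (_ : u + m%:R * d - (s + d) = u - (s + d) + m%:R * d); last by ring.
  by rewrite (_ : u - s = u - (s + d) + d); [ring|ring].
- exists (s - (u + m%:R * d)); first by rewrite subr_ge0.
  have md0 : 0 <= m%:R * d by rewrite mulr_ge0.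
  rewrite /incr_kernel /pow_incr !ler0_norm; try lra.
  rewrite (_ : - (u + m%:R * d - s) = s - (u + m%:R * d)); last by ring.
  rewrite (_ : - (u + m%:R * d - (s + d)) = s - (u + m%:R * d) + d); last by ring.
  rewrite (_ : - (u - (s + d)) = s - (u + m%:R * d) + m%:R * d + d); last by ring.
  by rewrite (_ : - (u - s) = s - (u + m%:R * d) + m%:R * d); [ring|ring].
Qed.

End IncrementKernel.

Section GridBlocks.
Variable R : realType.

Lemma incr_kernel_block_sign (p h : R) (ku kv lo hi : nat) :
  0 < p -> 0 < h -> (ku <= kv)%N ->
  [\/ (hi <= ku)%N, (ku <= lo)%N && (hi <= kv)%N | (kv <= lo)%N] ->
  {in index_iota lo.+1 hi.+1, forall j,
     0 <= incr_kernel p (ku%:R * h) (kv%:R * h) (j.-1%:R * h) (j%:R * h)} \/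
  {in index_iota lo.+1 hi.+1, forall j,
     incr_kernel p (ku%:R * h) (kv%:R * h) (j.-1%:R * h) (j%:R * h) <= 0}.
Proof.
move=> p0 h0 kuv position.
have grid_le x y : (x <= y)%N -> x%:R * h <= y%:R * h.
  by move=> xy; rewrite ler_pM2r // ler_nat.
have [inside|outside] := boolP ((ku <= lo)%N && (hi <= kv)%N).
  left=> j; rewrite mem_index_iota => /andP[lo_j j_hi].
  case/andP: inside => ku_lo hi_kv.
  by apply: incr_kernel_inside => //; apply: grid_le; lia.
have cellE j : (0 < j)%N -> j%:R * h = j.-1%:R * h + h.
  by move=> j0; rewrite -{1}(prednK j0) -addn1 natrD mulrDl mul1r.
have vE : kv%:R * h = ku%:R * h + (kv - ku)%N%:R * h.
  by rewrite -mulrDl -natrD subnKC.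
have cell_outside j : (lo < j <= hi)%N ->
    j.-1%:R * h + h <= ku%:R * h \/ kv%:R * h <= j.-1%:R * h.
  move=> /andP[lo_j j_hi]; rewrite -cellE; last by lia.
  by case: position outside => [hi_ku|->//|kv_lo] _; [left|right]; apply: grid_le; lia.
have [p_le1|p_gt1] := lerP p 1; [right|left] => j;
  rewrite mem_index_iota ltnS => /[dup]/andP[lo_j _] /cell_outside out_j;
  rewrite (cellE j) ?(leq_ltn_trans _ lo_j) //;
  have [z z0 ->] := incr_kernel_outside p (ltW h0) vE out_j.
- by rewrite subr_le0 pow_incr_shift_concave // ltW.
- by rewrite subr_ge0 pow_incr_shift_convex // ltW.
Qed.

End GridBlocks.

Section WeightedSums.
Variable R : realType.

Lemma sum_nat_blocks (F : nat -> R) (N b : nat) :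
  \sum_(1 <= j < (N * b).+1) F j =
  \sum_(1 <= i < N.+1) \sum_(((i.-1) * b).+1 <= j < (i * b).+1) F j.
Proof.
elim: N => [|N IH]; first by rewrite mul0n !big_geq.
rewrite (big_nat_recr N.+1) //= -IH (big_cat_nat _ (n := (N * b).+1)) //.
by rewrite ltnS mulSn leq_addl.
Qed.

(* For terms c j of a common sign, |sum c| = sum |c|, so a weighted sum of the
   |c j| is at most the largest weight times |sum c|. *)
Lemma weighted_sum_same_sign (I : eqType) (r : seq I) (w c : I -> R) :
  {in r, forall j, 0 <= c j} \/ {in r, forall j, c j <= 0} ->
  \sum_(j <- r) `|w j| * `|c j| <=
  (\big[Num.max/0]_(j <- r) `|w j|) * `|\sum_(j <- r) c j|.
Proof.
move=> same_sign; set M := \big[Num.max/0]_(j <- r) `|w j|.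
have M0 : 0 <= M by rewrite /M; elim/big_ind: _ => // x y x0 y0; rewrite le_max x0.
have abs_sum : \sum_(j <- r) `|c j| = `|\sum_(j <- r) c j|.
  case: same_sign => [c_ge0|c_le0].
  - rewrite ger0_norm; last by rewrite big_seq sumr_ge0.
    by rewrite !big_seq; apply: eq_bigr => j /c_ge0 /ger0_norm.
  - rewrite ler0_norm; last by rewrite big_seq sumr_le0.
    by rewrite -sumrN !big_seq; apply: eq_bigr => j /c_le0 /ler0_norm.
rewrite -abs_sum mulr_sumr !big_seq; apply: ler_sum => j rj.
by rewrite ler_wpM2r //; apply: (le_bigmax_seq _ _ _ _ rj).
Qed.

End WeightedSums.

Lemma incr_cov_kernel (d : measure_display) (T : measurableType d) (R : realType)
  (P : probability T R) (H : R) (W : R -> T -> R) (t s v u : R) :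
  is_fBm P H W -> 0 <= t -> 0 <= s -> 0 <= v -> 0 <= u ->
  incr_cov P W t s v u = incr_kernel (2 * H) u v s t / 2.
Proof.
case=> _ W_L2 W_cov _ t0 s0 v0 u0; rewrite /incr_cov.
have W_L1 x y : 0 <= x -> 0 <= y -> (W x \* W y) \in Lfun P 1.
  by move=> x0 y0; apply: Lfun2_mul_Lfun1; apply: W_L2.
have -> : (fun w => (W t w - W s w) * (W v w - W u w)) =
   ((W t \* W v) \- (W t \* W u)) \- ((W s \* W v) \- (W s \* W u)).
  by apply/funext => w /=; ring.
rewrite expectationB ?rpredB ?W_L1 // !expectationB ?W_L1 // !W_cov //.
by rewrite -!EFinB /= /fbm_cov /incr_kernel; ring.
Qed.

Section Grid.
Variable R : realType.

Lemma grid_point_of_int (x c : R) : 0 < c -> 0 <= x ->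
  (exists k : int, x * c = k%:~R) -> exists k : nat, x = k%:R / c.
Proof.
move=> c0 x0 [[k|k] xcE]; first by exists k; rewrite -[k%:R]/(k%:~R) -xcE mulfK ?gt_eqF.
have : 0 <= (Negz k)%:~R :> R by rewrite -xcE mulr_ge0 // ltW.
by rewrite ler0z.
Qed.

Lemma grid_point_refine (b n k : nat) : (0 < b)%N ->
  k%:R / b%:R ^+ n = (k * b)%:R / b%:R ^+ n.+1 :> R.
Proof.
move=> b0; have bR0 : b%:R != 0 :> R by rewrite pnatr_eq0 -lt0n.
by rewrite natrM exprSr invfM mulrACA divff // mulr1.
Qed.

Lemma coarse_cell_position (b i ku kv : nat) : (0 < i)%N -> (ku <= kv)%N ->
  [\/ (i * b <= ku * b)%N, (ku * b <= i.-1 * b)%N && (i * b <= kv * b)%N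
     | (kv * b <= i.-1 * b)%N].
Proof.
move=> i_gt0 kuv; have [i_ku|ku_lt_i] := leqP i ku; first by apply: Or31; nia.
by have [i_kv|kv_lt_i] := leqP i kv; [apply: Or32|apply: Or33]; nia.
Qed.

End Grid.

Theorem lemma3p7 (d : measure_display) (T : measurableType d) (R : realType)
  (P : probability T R) (H : R) (W : R -> T -> R)
  (b n : nat) (u v : R) (mu : nat -> R) :
  0 < H < 1 -> is_fBm P H W -> (2 <= b)%N ->
  0 <= u -> u <= v -> v <= 1 ->
  (exists k : int, u * b%:R ^+ n = k%:~R) ->
  (exists k : int, v * b%:R ^+ n = k%:~R) ->
  \sum_(1 <= j < (b ^ n.+1).+1)
     `|mu j| * `|incr_cov P W (j%:R / b%:R ^+ n.+1) (j.-1%:R / b%:R ^+ n.+1) v u|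
  <= \sum_(1 <= i < (b ^ n).+1)
     (\big[Num.max/0]_(((i.-1) * b).+1 <= j < (i * b).+1) `|mu j|) *
     `|incr_cov P W (i%:R / b%:R ^+ n) (i.-1%:R / b%:R ^+ n) v u|.
Proof.
move=> /andP[H0 _] fBm b2 u0 uv _ u_int v_int.
have b0 : (0 < b)%N by apply: leq_trans b2.
have bn0 : 0 < b%:R ^+ n :> R by rewrite exprn_gt0 // ltr0n.
have mesh0 : 0 < (b%:R ^+ n.+1)^-1 :> R by rewrite invr_gt0 exprn_gt0 // ltr0n.
have [ku uE] := grid_point_of_int bn0 u0 u_int.
have [kv vE] := grid_point_of_int bn0 (le_trans u0 uv) v_int.
have kuv : (ku <= kv)%N by move: uv; rewrite uE vE ler_pM2r ?invr_gt0 // ler_nat.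
rewrite {}uE {}vE !(grid_point_refine _ n) //.
under eq_big_nat => j _ do rewrite (incr_cov_kernel (H := H)) //.
rewrite expnSr sum_nat_blocks big_nat [X in _ <= X]big_nat.
apply: ler_sum => i /andP[i_ge1 _].
have block_le : (i.-1 * b <= i * b)%N by rewrite leq_mul2r leq_pred orbT.
rewrite (incr_cov_kernel (H := H)) // !(grid_point_refine _ n) //.
rewrite -(incr_kernel_telescope _ _ _ (fun j => j%:R / b%:R ^+ n.+1)) // mulr_suml.
apply: weighted_sum_same_sign.
have [K_ge0|K_le0] := incr_kernel_block_sign (mulr_gt0 (ltr0n _ 2) H0) mesh0
  (leq_mul kuv (leqnn b)) (coarse_cell_position b i_ge1 kuv).
- by left=> j /K_ge0; lra.
- by right=> j /K_le0; lra.
Qed.
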